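(* Assume the Continuum Hypothesis. If $\emptyset\neq U\subseteq\mathbb{R}$ and $\mathbb{R}\setminus U$ is uncountable, then there is a two-point selection $f$ on $\mathbb{R}$ such that $U\notin\tau_f$.
   Context: A two-point selection on $\mathbb{R}$ is a function $f$ from the set of two-element subsets of $\mathbb{R}$ to $\mathbb{R}$ with $f(F)\in F$. Write $r<_f s$ if $f(\{r,s\})=r$ ($r\ne s$), $(\leftarrow,r)_f=\{x: x<_f r\}$, $(r,\rightarrow)_f=\{x: r<_f x\}$. The topology $\tau_f$ on $\mathbb{R}$ is generated (as a subbase) by all sets $(\leftarrow,r)_f$, $(r,\rightarrow)_f$, $r\in\mathbb{R}$. *)

From mathcomp Require Import all_boot all_order all_algebra.
From mathcomp Require Import all_classical all_reals.
Set Implicit Arguments. Unset Strict Implicit. Unset Printing Implicit Defensive.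
Local Open Scope classical_set_scope.

(* We work over an arbitrary real number type R (all realTypes are
   isomorphic to the reals). *)

Definition CH (R : realType) : Prop :=
  forall A : set R, ~ countable A -> (A #= [set: R])%card.

(* A two-point selection on R, represented as a binary function f with
   f {r,s} := f r s; only the values on pairs of distinct points matter. *)
Definition two_point_selection (R : realType) (f : R -> R -> R) : Prop :=
  forall r s : R, r <> s -> f r s = f s r /\ (f r s = r \/ f r s = s).

Definition lt_f (R : realType) (f : R -> R -> R) (r s : R) : Prop :=
  r <> s /\ f r s = r.

Definition ray_left (R : realType) (f : R -> R -> R) (r : R) : set R :=
  [set x | lt_f f x r].
Definition ray_right (R : realType) (f : R -> R -> R) (r : R) : set R :=
  [set x | lt_f f r x].

Definition subbase_set (R : realType) (f : R -> R -> R) (r : R) (b : bool) :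
  set R := if b then ray_left f r else ray_right f r.

(* U is open in tau_f, the topology generated by the subbase of all rays:
   every point of U lies in a finite intersection of subbase sets contained
   in U (the empty intersection being all of R). *)
Definition tau_f_open (R : realType) (f : R -> R -> R) (U : set R) : Prop :=
  forall x, U x ->
    exists (n : nat) (r : 'I_n -> R) (b : 'I_n -> bool),
      (forall i, subbase_set f (r i) (b i) x) /\
      (forall y, (forall i, subbase_set f (r i) (b i) y) -> U y).

From mathcomp Require Import all_boot all_order all_algebra.
From mathcomp Require Import all_classical all_reals.
Set Implicit Arguments. Unset Strict Implicit. Unset Printing Implicit Defensive.
Import Order.TTheory GRing.Theory Num.Theory.
Local Open Scope classical_set_scope.

(* Pick x0 in U and an injective sequence g in the uncountable complement of U.
   Order R lexicographically by the key y |-> (x0, 1/(n+1)) if y = g n and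
   y |-> (y, 0) otherwise: the points of g are squeezed into a decreasing
   sequence just above x0, so g converges to x0 in the order topology, which
   is tau_f for the selection f picking the smaller point. Since x0 lies in U
   and no g n does, U is not open. *)

Lemma infinite_injective_seq (T : Type) (A : set T) : infinite_set A ->
  exists u : nat -> T, injective u /\ forall n, A (u n).
Proof.
move=> /infiniteP /card_leP [h].
pose u n := val (h (SigSub (in_setT n))).
exists u; split; last by move=> n; exact/set_mem/(valP (h (SigSub (in_setT n)))).
move=> m n /val_inj /(@inj _ _ _ h) mn.
by have [] := mn (in_setT _) (in_setT _).
Qed.

Section KeySelection.
Variables (R : realType) (d : Order.disp_t) (T : orderType d) (key : R -> T).

Definition key_selection (a b : R) : R := if (key a < key b)%O then a else b.

Lemma key_selection_two_point : injective key -> two_point_selection key_selection.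
Proof.
move=> key_inj r s rs; rewrite /key_selection.
case: (ltgtP (key r) (key s)) => [|//|/key_inj //]; last by split; [|right].
by split; [|left].
Qed.

Lemma lt_key_selectionE a b : lt_f key_selection a b <-> (key a < key b)%O.
Proof.
rewrite /lt_f /key_selection; split.
  by case=> ab; case: ifP => // _ ba; case: ab.
by move=> ab; rewrite ab; split=> // ba; rewrite ba ltxx in ab.
Qed.

End KeySelection.

Definition tau_f_cvg (R : realType) (f : R -> R -> R) (u : nat -> R) (x : R) :=
  forall r b, subbase_set f r b x ->
    exists M, forall N, (M <= N)%N -> subbase_set f r b (u N).

Lemma tau_f_open_cvg (R : realType) (f : R -> R -> R) (U : set R)
    (u : nat -> R) (x : R) :
  tau_f_cvg f u x -> tau_f_open f U -> U x -> exists N, U (u N).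
Proof.
move=> ux /[apply] -[n [r [b [xrb rbU]]]].
have /fin_all_exists [M uM] i : exists M, forall N, (M <= N)%N ->
    subbase_set f (r i) (b i) (u N) by exact: ux.
by exists (\max_i M i); apply: rbU => i; apply: uM; exact: leq_bigmax.
Qed.

Section LexiKey.
Local Open Scope ring_scope.
Variables (R : realType) (x0 : R) (g : nat -> R).
Hypotheses (g_inj : injective g) (x0_notin_g : ~ range g x0).

(* Off the range of g this is the junk value 0, harmless as an index bound. *)
Definition seq_index (y : R) : nat := xget 0%N [set n | g n = y].

Definition lexi_key (y : R) : R *l R :=
  if pselect (range g y) then (x0, (seq_index y).+1%:R^-1) else (y, 0).

Lemma seq_indexE n : seq_index (g n) = n.
Proof. by apply: xget_unique => // m /g_inj. Qed.

Lemma lexi_key_seq n : lexi_key (g n) = (x0, n.+1%:R^-1).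
Proof. by rewrite /lexi_key seq_indexE; case: pselect => // -[]; exists n. Qed.

Lemma lexi_key_notin y : ~ range g y -> lexi_key y = (y, 0).
Proof. by rewrite /lexi_key; case: pselect. Qed.

Lemma lexi_key_inj : injective lexi_key.
Proof.
have key_seq_notin m y : ~ range g y -> lexi_key (g m) != lexi_key y.
  move=> gy; rewrite lexi_key_seq lexi_key_notin //.
  by rewrite xpair_eqE invr_eq0 pnatr_eq0 andbF.
move=> a b; case: (pselect (range g a)) => [[m _ <-]|ga];
  case: (pselect (range g b)) => [[n _ <-]|gb].
- rewrite !lexi_key_seq => -[/(congr1 GRing.inv)]; rewrite !invrK => /eqP.
  by rewrite eqr_nat eqSS => /eqP ->.
- by move=> /eqP; rewrite (negPf (key_seq_notin _ _ gb)).
- by move=> /esym /eqP; rewrite (negPf (key_seq_notin _ _ ga)).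
- by rewrite !lexi_key_notin // => -[].
Qed.

Lemma lexi_key_seq_side r N : (seq_index r < N)%N ->
  ((lexi_key x0 < lexi_key r)%O -> (lexi_key (g N) < lexi_key r)%O) /\
  ((lexi_key r < lexi_key x0)%O -> (lexi_key r < lexi_key (g N))%O).
Proof.
rewrite lexi_key_seq (lexi_key_notin x0_notin_g).
case: (pselect (range g r)) => [[m _ <-]|gr].
  rewrite seq_indexE lexi_key_seq !ltxi_pair lexx /= => mN.
  rewrite ltf_pV2 ?posrE ?ltr0n // ltr_nat ltnS mN invr_gt0 ltr0n.
  by split=> //; rewrite ltNge invr_ge0 ler0n.
rewrite (lexi_key_notin gr) !ltxi_pair !ltxx !implybF => _.
by split=> /andP [-> /negPf ->].
Qed.

Lemma seq_tau_f_cvg : tau_f_cvg (key_selection lexi_key) g x0.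
Proof.
move=> r b x0rb; exists (seq_index r).+1 => N /lexi_key_seq_side [above below].
by case: b x0rb => /lt_key_selectionE x0r; apply/lt_key_selectionE;
  [exact: above | exact: below].
Qed.

End LexiKey.

Theorem corollary3p13 (R : realType) (hCH : CH R) (U : set R) :
  U !=set0 -> ~ countable (~` U) ->
  exists f : R -> R -> R, two_point_selection f /\ ~ tau_f_open f U.
Proof.
move=> [x0 Ux0] /(contra_not (@finite_set_countable _ _)).
move=> /infinite_injective_seq [g [g_inj gNU]].
have x0_notin_g : ~ range g x0 by move=> [n _ gn]; apply: (gNU n); rewrite gn.
exists (key_selection (lexi_key x0 g)).
split; first exact/key_selection_two_point/lexi_key_inj.
move=> /(tau_f_open_cvg (seq_tau_f_cvg g_inj x0_notin_g))/(_ Ux0) [N].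
exact: gNU.
Qed.
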